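(* Let $\mathcal C=\{1,\dots,n\}$, let $L$ be an evaluation scale (as in the context), let $\mu:2^{\mathcal C}\to L$ be a capacity, let $q\in\{1,\dots,n\}$ and let $x=(x_1,\dots,x_n)\in L^{n}$. (1) If $\mu$ is $q$-maxitive, then $$S_\mu(x)=\max_{A\subseteq\mathcal C,\ A\neq\emptyset,\ |A|\le q}\ \min\Big(\min_{i\in A}x_i,\ \mu(A)\Big).$$ (2) If $\mu$ is $q$-minitive, then $$S_\mu(x)=\min_{A\subsetneq\mathcal C,\ |A|\ge n-q}\ \max\Big(\max_{i\in \overline A}x_i,\ \mu(A)\Big),$$ where $\overline A=\mathcal C\setminus A$.
   Context: $L$ is either a finite totally ordered set $0=\xi_1<\xi_2<\dots<\xi_l=1$ or $L=[0,1]$. A capacity is a map $\mu:2^{\mathcal C}\to L$ with $\mu(\emptyset)=0$, $\mu(\mathcal C)=1$ and $A\subseteq B\Rightarrow\mu(A)\le\mu(B)$. The Sugeno integral of $x\in L^n$ w.r.t. $\mu$ is $S_\mu(x)=\max_{A\subseteq\mathcal C}\min(\min_{i\in A}x_i,\mu(A))$ (with $\min_{i\in\emptyset}x_i=1$), which equals $\min_{A\subseteq\mathcal C}\max(\max_{i\in\overline A}x_i,\mu(A))$ (with $\max_{i\in\emptyset}x_i=0$). A capacity $\mu$ is $q$-maxitive if for all $X\subseteq\mathcal C$ with $|X|>q$, $\mu(X)=\max_{Y\subsetneq X,\ |Y|\le q}\mu(Y)$; it is $q$-minitive if for all $X\subseteq\mathcal C$ with $|X|<n-q$, $\mu(X)=\min_{Y\supsetneq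 X,\ |Y|\ge n-q}\mu(Y)$. *)

(* The evaluation scale L is modelled as an arbitrary
   bounded totally ordered type (tbOrderType): this covers both the finite
   chains 0 = xi_1 < ... < xi_l = 1 and the real interval [0,1]. *)
From HB Require Import structures.
From mathcomp Require Import all_boot all_order.
Set Implicit Arguments. Unset Strict Implicit. Unset Printing Implicit Defensive.
Import Order.TTheory.
Local Open Scope order_scope.

Section Defs.
Context {disp : Order.disp_t} {L : tbOrderType disp} {n : nat}.

(* criteria C = {1..n} are represented by 'I_n *)
Definition is_capacity (mu : {set 'I_n} -> L) : Prop :=
  [/\ mu set0 = Order.bottom, mu setT = Order.top &
      forall A B : {set 'I_n}, A \subset B -> mu A <= mu B].

Definition sugeno (mu : {set 'I_n} -> L) (x : 'I_n -> L) : L :=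
  \big[Order.max/Order.bottom]_(A : {set 'I_n})
     Order.min (\big[Order.min/Order.top]_(i in A) x i) (mu A).

Definition q_maxitive (q : nat) (mu : {set 'I_n} -> L) : Prop :=
  forall X : {set 'I_n}, (q < #|X|)%N ->
    mu X = \big[Order.max/Order.bottom]_(Y : {set 'I_n} | (Y \proper X) && (#|Y| <= q)%N) mu Y.

Definition q_minitive (q : nat) (mu : {set 'I_n} -> L) : Prop :=
  forall X : {set 'I_n}, (#|X| < n - q)%N ->
    mu X = \big[Order.min/Order.top]_(Y : {set 'I_n} | (X \proper Y) && (n - q <= #|Y|)%N) mu Y.

End Defs.

(* For a q-maxitive capacity, the term min (min_{i in A} x_i, mu A) of a large
   set A is the max of the terms min (min_{i in A} x_i, mu Y) over its small
   subsets Y, and each of these is dominated by the term of Y itself, since the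
   inner min only grows when A shrinks to Y. Part (2) is the same argument run
   on the min-max form of the Sugeno integral, with complements in place of
   subsets. *)
From HB Require Import structures.
From mathcomp Require Import all_boot all_order.
Import Order.TTheory.
Local Open Scope order_scope.

Section BigMinMax.
Context {disp : Order.disp_t}.

Lemma min_bigmaxr {T : bOrderType disp} (I : Type) (r : seq I) (P : pred I)
    (F : I -> T) (a : T) :
  Order.min a (\big[Order.max/Order.bottom]_(i <- r | P i) F i) =
  \big[Order.max/Order.bottom]_(i <- r | P i) Order.min a (F i).
Proof. exact: (big_morph _ (min_maxr a) (min_r (le0x a))). Qed.

Lemma max_bigminr {T : tOrderType disp} (I : Type) (r : seq I) (P : pred I)
    (F : I -> T) (a : T) :
  Order.max a (\big[Order.min/Order.top]_(i <- r | P i) F i) =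
  \big[Order.min/Order.top]_(i <- r | P i) Order.max a (F i).
Proof. exact: (big_morph _ (max_minr a) (max_r (lex1 a))). Qed.

Lemma bigmaxD1_bot {T : bOrderType disp} {I : finType} (j : I) (P : pred I)
    (F : I -> T) :
  F j = Order.bottom ->
  \big[Order.max/Order.bottom]_(i | P i) F i =
  \big[Order.max/Order.bottom]_(i | (i != j) && P i) F i.
Proof.
move=> Fj0; apply: le_anti; apply/andP; split; last first.
  by apply: sub_bigmax => i /andP[].
apply: bigmax_le => [|i Pi]; first exact: le0x.
have [->|ij] := eqVneq i j; first by rewrite Fj0 le0x.
by apply: le_bigmax_cond; rewrite ij.
Qed.

Lemma bigminD1_top {T : tOrderType disp} {I : finType} (j : I) (P : pred I)
    (F : I -> T) :
  F j = Order.top ->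
  \big[Order.min/Order.top]_(i | P i) F i =
  \big[Order.min/Order.top]_(i | (i != j) && P i) F i.
Proof.
move=> Fj1; apply: le_anti; apply/andP; split.
  by apply: sub_bigmin => i /andP[].
apply: le_bigmin => [|i Pi]; first exact: lex1.
have [->|ij] := eqVneq i j; first by rewrite Fj1 lex1.
by apply: bigmin_le_cond; rewrite ij.
Qed.

End BigMinMax.

Section Sugeno.
Context {disp : Order.disp_t} {L : tbOrderType disp} {n : nat}.
Variables (mu : {set 'I_n} -> L) (x : 'I_n -> L).

Definition sugeno_dual : L :=
  \big[Order.min/Order.top]_(A : {set 'I_n})
     Order.max (\big[Order.max/Order.bottom]_(i in ~: A) x i) (mu A).

Lemma sugenoEdual : {homo mu : A B / A \subset B >-> A <= B} ->
  sugeno mu x = sugeno_dual.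
Proof.
move=> mu_mono; apply: le_anti; apply/andP; split.
- apply: le_bigmin => [|B _]; first exact: lex1.
  apply: bigmax_le => [|A _]; first exact: le0x.
  have [sAB|/subsetPn[i iA iNB]] := boolP (A \subset B).
    by rewrite ge_min !le_max mu_mono ?orbT.
  rewrite ge_min le_max -orbA; apply/orP; left.
  apply: (le_trans (bigmin_le_cond _ _ iA)).
  by apply: le_bigmax_cond; rewrite in_setC.
- (* Witness: the strict upper level set of x at the value of the integral. *)
  set v := sugeno mu x; set B := [set i | v < x i].
  apply: (bigmin_inf B) => //; rewrite ge_max; apply/andP; split.
    apply: bigmax_le => [|i]; first exact: le0x.
    by rewrite in_setC in_set -leNgt.
  rewrite leNgt; apply/negP => v_lt_muB.
  have : Order.min (\big[Order.min/Order.top]_(i in B) x i) (mu B) <= v.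
    exact: le_bigmax.
  rewrite leNgt lt_min v_lt_muB andbT => /negP; apply.
  apply/bigmin_gtP; split; first exact: lt_le_trans v_lt_muB (lex1 _).
  by move=> i; rewrite in_set.
Qed.

Variable q : nat.

Lemma sugeno_maxitive : q_maxitive q mu ->
  sugeno mu x =
  \big[Order.max/Order.bottom]_(A : {set 'I_n} | (#|A| <= q)%N)
     Order.min (\big[Order.min/Order.top]_(i in A) x i) (mu A).
Proof.
move=> mu_max; apply: le_anti; apply/andP; split; last exact: sub_bigmax.
apply: bigmax_le => [|A _]; first exact: le0x.
have [Aq|qA] := leqP #|A| q; first exact: le_bigmax_cond.
rewrite mu_max // min_bigmaxr; apply: bigmax_le => [|Y /andP[YA Yq]].
  exact: le0x.
apply: (bigmax_sup Y) => //; rewrite le_min2 //.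
by apply: sub_bigmin => i; apply: (subsetP (proper_sub YA)).
Qed.

Lemma sugeno_dual_minitive : q_minitive q mu ->
  sugeno_dual =
  \big[Order.min/Order.top]_(A : {set 'I_n} | (n - q <= #|A|)%N)
     Order.max (\big[Order.max/Order.bottom]_(i in ~: A) x i) (mu A).
Proof.
move=> mu_min; apply: le_anti; apply/andP; split; first exact: sub_bigmin.
apply: le_bigmin => [|A _]; first exact: lex1.
have [qA|Aq] := leqP (n - q) #|A|; first exact: bigmin_le_cond.
rewrite mu_min // max_bigminr; apply: le_bigmin => [|Y /andP[AY Yq]].
  exact: lex1.
apply: (bigmin_inf Y) => //; rewrite le_max2 //.
apply: sub_bigmax => i; rewrite !in_setC; apply: contra.
exact: (subsetP (proper_sub AY)).
Qed.

End Sugeno.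

Theorem lemma1 (disp : Order.disp_t) (L : tbOrderType disp) (n : nat)
    (mu : {set 'I_n} -> L) (q : nat) (x : 'I_n -> L) :
  is_capacity mu -> (1 <= q <= n)%N ->
  (q_maxitive q mu ->
     sugeno mu x =
     \big[Order.max/Order.bottom]_(A : {set 'I_n} | (A != set0) && (#|A| <= q)%N)
        Order.min (\big[Order.min/Order.top]_(i in A) x i) (mu A))
  /\
  (q_minitive q mu ->
     sugeno mu x =
     \big[Order.min/Order.top]_(A : {set 'I_n} | (A \proper setT) && (n - q <= #|A|)%N)
        Order.max (\big[Order.max/Order.bottom]_(i in ~: A) x i) (mu A)).
Proof.
move=> [mu0 muT mu_mono] _; split => [mu_max | mu_min].
- rewrite (sugeno_maxitive _ _ _ mu_max) (bigmaxD1_bot set0) // mu0.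
  exact: min_r (le0x _).
- rewrite sugenoEdual // (sugeno_dual_minitive _ _ _ mu_min).
  under [RHS]eq_bigl do rewrite properT.
  by rewrite (bigminD1_top setT) // muT; apply: max_r (lex1 _).
Qed.
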